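(* Let $\Lambda$ be a strongly connected $k$-graph and $(G,\Lambda)$ a locally faithful self-similar action. Let $p,q,p',q'\in\mathbb{N}^k$ with $p-q=p'-q'$, and suppose $(p,q,g)\in\Sigma^v_{G,\Lambda}$ for some $g\in G$ and $v\in\Lambda^0$. Then for every $\mu\in\Lambda^{p'}$ there exist unique $h\in G$ and $\nu\in\Lambda^{q'}$ such that $(\mu,h,\nu)$ is a cycline triple; and for every $\nu'\in\Lambda^{q'}$ there exist unique $h'\in G$ and $\mu'\in\Lambda^{p'}$ such that $(\mu',h',\nu')$ is a cycline triple.
   Context: Let $k\ge1$. A $k$-graph is a countable small category $\Lambda$ together with a functor $d:\Lambda\to\mathbb{N}^k$ (the degree map) with the unique factorization property: for every $\mu\in\Lambda$ and $m,n\in\mathbb{N}^k$ with $d(\mu)=m+n$ there are unique $\alpha,\beta\in\Lambda$ with $d(\alpha)=m$, $d(\beta)=n$ and $\mu=\alpha\beta$. Write $\Lambda^n=d^{-1}(n)$; $\Lambda^0$ is identified with the set of objects (vertices), and $r,s$ denote range and source. For $v,w\in\Lambda^0$ write $v\Lambda=r^{-1}(v)$, $v\Lambda w=r^{-1}(v)\cap s^{-1}(w)$. All $k$-graphs are assumed row-finite ($|v\Lambda^n|<\infty$) and source-free ($v\Lambda^n\neq\emptyset$). $\Lambda$ is strongly connected if $v\Lambda w\neq\emptyset$ for all $v,w\in\Lambda^0$. Infinite paths: let $\Omega_k=\{(p,q)\in\mathbb{N}^k\times\mathbb{N}^k:p\le q\}$ with $r(p,q)=(p,p)$, $s(p,q)=(q,q)$,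 $(p,q)(q,m)=(p,m)$, $d(p,q)=q-p$. An infinite path is a degree-preserving functor $x:\Omega_k\to\Lambda$; $\Lambda^\infty$ is the set of infinite paths, $v\Lambda^\infty=\{x:x(0,0)=v\}$, the shift is $\sigma^n(x)(p,q)=x(p+n,q+n)$, and for $\mu\in\Lambda$, $x\in s(\mu)\Lambda^\infty$, $\mu x$ is the unique infinite path $y$ with $y(0,d(\mu))=\mu$ and $\sigma^{d(\mu)}(y)=x$. Self-similar actions: $G$ is a countable discrete group. A self-similar action $(G,\Lambda)$ consists of an action of $G$ on $\Lambda$ by automorphisms (bijections preserving $d$, $r$, $s$), written $g\cdot\mu$, and a restriction map $G\times\Lambda\to G$, $(g,\mu)\mapsto g|_\mu$, such that for all $g,h\in G$, $v\in\Lambda^0$ and $\mu,\nu$ with $s(\mu)=r(\nu)$: $g\cdot(\mu\nu)=(g\cdot\mu)(g|_\mu\cdot\nu)$; $g|_v=g$; $g|_{\mu\nu}=(g|_\mu)|_\nu$; $1_G|_\mu=1_G$; $(gh)|_\mu=g|_{h\cdot\mu}\,h|_\mu$. For $x\in\Lambda^\infty$, $(g\cdot x)(p,q)=g|_{x(0,p)}\cdot x(p,q)$. The action is locally faithful if, whenever $g\in G$, $v\in\Lambda^0$ and $g\cdot\mu=\mu$ for all $\mu\in v\Lambda$, then $g=1_G$. Cycline triples and local periodicity: a triple $(\mu,g,\nu)\in\Lambda\times G\times\Lambda$ with $s(\mu)=g\cdot s(\nu)$ is cycline if $\mu(g\cdot x)=\nu x$ for all $x\in s(\nu)\Lambda^\infty$.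 For $v\in\Lambda^0$, $\Sigma^v_{G,\Lambda}=\{(p,q,g)\in\mathbb{N}^k\times\mathbb{N}^k\times G:\sigma^p(x)=\sigma^q(g\cdot x)\text{ for all }x\in v\Lambda^\infty\}$. *)

From HB Require Import structures.
From mathcomp Require Import all_boot.
From Stdlib Require Import List.

Set Implicit Arguments.
Unset Strict Implicit.
Unset Printing Implicit Defensive.

Definition Nk (k : nat) := {ffun 'I_k -> nat}.
Definition nk0 (k : nat) : Nk k := [ffun _ => 0%N].
Definition nkadd (k : nat) (m n : Nk k) : Nk k := [ffun i => (m i + n i)%N].
Definition nksub (k : nat) (m n : Nk k) : Nk k := [ffun i => (m i - n i)%N].
Definition nkle (k : nat) (m n : Nk k) : Prop := forall i, (m i <= n i)%N.

(* ---------- k-graphs ----------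
   The category is given by its morphisms ("paths"); objects are identified
   with the identity morphisms, which are exactly the ranges/sources of paths.
   Composition is a total function, only constrained on composable pairs
   (ks mu = kr nu); kcomp mu nu stands for the paper's mu nu. *)
Record kgraph (k : nat) := KGraph {
  kpath : Type;
  kd : kpath -> Nk k;
  kr : kpath -> kpath;
  ks : kpath -> kpath;
  kcomp : kpath -> kpath -> kpath;
  kr_r : forall mu, kr (kr mu) = kr mu;
  ks_r : forall mu, ks (kr mu) = kr mu;
  kr_s : forall mu, kr (ks mu) = ks mu;
  ks_s : forall mu, ks (ks mu) = ks mu;
  kcomp_idl : forall mu, kcomp (kr mu) mu = mu;
  kcomp_idr : forall mu, kcomp mu (ks mu) = mu;
  kcomp_r : forall mu nu, ks mu = kr nu -> kr (kcomp mu nu) = kr mu;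
  kcomp_s : forall mu nu, ks mu = kr nu -> ks (kcomp mu nu) = ks nu;
  kcomp_assoc : forall mu nu la, ks mu = kr nu -> ks nu = kr la ->
      kcomp (kcomp mu nu) la = kcomp mu (kcomp nu la);
  kd_id : forall mu, kd (kr mu) = nk0 k;
  kd_comp : forall mu nu, ks mu = kr nu -> kd (kcomp mu nu) = nkadd (kd mu) (kd nu);
  k_ufp : forall mu (m n : Nk k), kd mu = nkadd m n ->
      exists! ab : kpath * kpath,
        [/\ kd ab.1 = m, kd ab.2 = n, ks ab.1 = kr ab.2 & mu = kcomp ab.1 ab.2];
  k_countable : exists f : kpath -> nat, injective f
}.

Arguments kd {k L} _ : rename.
Arguments kr {k L} _ : rename.
Arguments ks {k L} _ : rename.
Arguments kcomp {k L} _ _ : rename.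

Definition is_vertex k (L : kgraph k) (v : kpath L) : Prop := kd v = nk0 k.

Definition row_finite k (L : kgraph k) : Prop :=
  forall (v : kpath L) (n : Nk k), is_vertex v ->
    exists s : list (kpath L), forall mu, kr mu = v -> kd mu = n -> In mu s.

Definition source_free k (L : kgraph k) : Prop :=
  forall (v : kpath L) (n : Nk k), is_vertex v ->
    exists mu : kpath L, kr mu = v /\ kd mu = n.

Definition strongly_connected k (L : kgraph k) : Prop :=
  forall v w : kpath L, is_vertex v -> is_vertex w ->
    exists mu : kpath L, kr mu = v /\ ks mu = w.

Record group := Group {
  gcar : Type;
  gmul : gcar -> gcar -> gcar;
  gone : gcar;
  ginv : gcar -> gcar;
  gmulA : forall x y z, gmul x (gmul y z) = gmul (gmul x y) z;
  gmul1 : forall x, gmul gone x = x;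
  gmulr1 : forall x, gmul x gone = x;
  gmulV : forall x, gmul (ginv x) x = gone;
  gmulVr : forall x, gmul x (ginv x) = gone;
  g_countable : exists f : gcar -> nat, injective f
}.
Arguments gmul {G} _ _ : rename.
Arguments gone {G} : rename.
Arguments ginv {G} _ : rename.

Record ssa k (L : kgraph k) (G : group) := SSA {
  act : gcar G -> kpath L -> kpath L;
  res : gcar G -> kpath L -> gcar G;
  act_bij : forall g, bijective (act g);
  act_d : forall g mu, kd (act g mu) = kd mu;
  act_r : forall g mu, kr (act g mu) = act g (kr mu);
  act_s : forall g mu, ks (act g mu) = act g (ks mu);
  act1 : forall mu, act gone mu = mu;
  actM : forall g h mu, act (gmul g h) mu = act g (act h mu);
  act_comp : forall g mu nu, ks mu = kr nu ->
      act g (kcomp mu nu) = kcomp (act g mu) (act (res g mu) nu);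
  res_vertex : forall g v, is_vertex v -> res g v = g;
  res_comp : forall g mu nu, ks mu = kr nu -> res g (kcomp mu nu) = res (res g mu) nu;
  res1 : forall mu, res gone mu = gone;
  resM : forall g h mu, res (gmul g h) mu = gmul (res g (act h mu)) (res h mu)
}.
Arguments act {k L G} _ _ _ : rename.
Arguments res {k L G} _ _ _ : rename.

Definition locally_faithful k (L : kgraph k) (G : group) (A : ssa L G) : Prop :=
  forall (g : gcar G) (v : kpath L), is_vertex v ->
    (forall mu, kr mu = v -> act A g mu = mu) -> g = gone.

(* ---------- infinite paths ----------
   A function x : N^k -> N^k -> kpath; only its values at (p,q) with p <= q
   (i.e. on Omega_k) are meaningful. *)
Definition ipath k (L : kgraph k) := Nk k -> Nk k -> kpath L.

Definition is_infpath k (L : kgraph k) (x : ipath L) : Prop :=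
  [/\ forall p q, nkle p q -> kd (x p q) = nksub q p,
      forall p q, nkle p q -> kr (x p q) = x p p /\ ks (x p q) = x q q
    & forall p q m, nkle p q -> nkle q m -> x p m = kcomp (x p q) (x q m)].

Definition ipeq k (L : kgraph k) (x y : ipath L) : Prop :=
  forall p q, nkle p q -> x p q = y p q.

Definition shift k (L : kgraph k) (n : Nk k) (x : ipath L) : ipath L :=
  fun p q => x (nkadd p n) (nkadd q n).

Definition iact k (L : kgraph k) (G : group) (A : ssa L G) (g : gcar G)
  (x : ipath L) : ipath L :=
  fun p q => act A (res A g (x (nk0 k) p)) (x p q).

(* y is the infinite kpath  mu x  *)
Definition is_concat k (L : kgraph k) (mu : kpath L) (x y : ipath L) : Prop :=
  [/\ is_infpath y, y (nk0 k) (kd mu) = mu & ipeq (shift (kd mu) y) x].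

Definition cycline k (L : kgraph k) (G : group) (A : ssa L G)
  (mu : kpath L) (g : gcar G) (nu : kpath L) : Prop :=
  ks mu = act A g (ks nu) /\
  forall x : ipath L, is_infpath x -> x (nk0 k) (nk0 k) = ks nu ->
    exists y : ipath L, is_concat mu (iact A g x) y /\ is_concat nu x y.

Definition Sigma k (L : kgraph k) (G : group) (A : ssa L G) (v : kpath L)
  (p q : Nk k) (g : gcar G) : Prop :=
  forall x : ipath L, is_infpath x -> x (nk0 k) (nk0 k) = v ->
    ipeq (shift p x) (shift q (iact A g x)).

From HB Require Import structures.
From mathcomp Require Import all_boot zify.
From Stdlib Require Import ClassicalEpsilon.

Set Implicit Arguments.
Unset Strict Implicit.
Unset Printing Implicit Defensive.

(** If [(p, q, g)] lies in [Sigma^v], take a path [lam] from [v] long enough to be written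
    both as [alpha rho] with [d(rho) = p'] and as [beta nu] with [d(nu) = q'].  For every
    infinite path [x] from [s(lam)], the identity [sigma^p(y) = sigma^q(g y)] for [y = lam x],
    read from the point where [nu] starts, says that [nu x = (g|alpha . rho)(g|lam . x)];
    so [(g|alpha . rho, g|lam, nu)] is cycline.  Strong connectivity lets [lam] end with any
    prescribed [nu].  To prescribe the first component [mu], one first chooses [alpha] so
    that [g|alpha] maps [s(alpha)] to [r(mu)] -- possible because, again by [Sigma],
    [g|(a b)] and [g|a] agree on [s(b)] when [r(a) = v] and [d(a) = q] -- and then takes
    [rho = (g|alpha)^-1 . mu].
    Conversely a cycline triple is determined by one side: [nu x] determines [mu] and all
    of [h . x], and local faithfulness recovers [h] from its action on the paths at [s(nu)]. *)

Lemma nk_ext k (m n : Nk k) : (forall i, m i = n i) -> m = n.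
Proof. by move=> H; apply/ffunP. Qed.

Lemma nkaddE k (m n : Nk k) i : nkadd m n i = (m i + n i)%N.
Proof. by rewrite ffunE. Qed.

Lemma nksubE k (m n : Nk k) i : nksub m n i = (m i - n i)%N.
Proof. by rewrite ffunE. Qed.

Lemma nk0E k i : nk0 k i = 0%N.
Proof. by rewrite ffunE. Qed.

Ltac nk_pointwise i :=
  repeat match goal with
  | H : nkle _ _ |- _ => move: (H i); clear H
  | H : @eq (Nk _) _ _ |- _ => move: (congr1 (fun f : Nk _ => f i) H); clear H
  end; repeat first [rewrite nkaddE | rewrite nksubE | rewrite nk0E].

Ltac nk_arith :=
  let i := fresh "i" in
  (apply: nk_ext => i || move=> i); nk_pointwise i; lia.

Lemma nkaddC k (m n : Nk k) : nkadd m n = nkadd n m.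
Proof. nk_arith. Qed.

Lemma add0nk k (m : Nk k) : nkadd (nk0 k) m = m.
Proof. nk_arith. Qed.

Lemma le0nk k (m : Nk k) : nkle (nk0 k) m.
Proof. nk_arith. Qed.

Section Factorization.
Variables (k : nat) (L : kgraph k).
Implicit Types (a b pi v : kpath L) (m n : Nk k).

Definition is_factorization pi m (ab : kpath L * kpath L) : Prop :=
  [/\ kd ab.1 = m, kd ab.2 = nksub (kd pi) m, ks ab.1 = kr ab.2 & pi = kcomp ab.1 ab.2].

(* Only meaningful when [nkle m (kd pi)]; otherwise an arbitrary pair. *)
Definition factor pi m := epsilon (inhabits (pi, pi)) (is_factorization pi m).
Definition pre pi m := (factor pi m).1.
Definition post pi m := (factor pi m).2.

Lemma factorP pi m : nkle m (kd pi) ->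
  [/\ kd (pre pi m) = m, kd (post pi m) = nksub (kd pi) m,
      ks (pre pi m) = kr (post pi m) & pi = kcomp (pre pi m) (post pi m)].
Proof.
move=> Hm; suff: is_factorization pi m (factor pi m) by [].
apply: epsilon_spec; have Hd : kd pi = nkadd m (nksub (kd pi) m) by nk_arith.
by have [ab [[? ? ? ?] _]] := k_ufp Hd; exists ab.
Qed.

Lemma factor_kcomp a b m : ks a = kr b -> kd a = m ->
  pre (kcomp a b) m = a /\ post (kcomp a b) m = b.
Proof.
move=> Hab Ha; have Hd : kd (kcomp a b) = nkadd m (kd b) by rewrite kd_comp // Ha.
have Hm : nkle m (kd (kcomp a b)) by rewrite Hd; nk_arith.
have [Hpre Hpost Hc Hpi] := factorP Hm.
have [ab [_ Huniq]] := k_ufp Hd.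
have E : (pre (kcomp a b) m, post (kcomp a b) m) = (a, b).
  rewrite -(Huniq (a, b)) //; apply/esym/Huniq.
  by split=> //=; rewrite Hpost Hd; nk_arith.
by case: E.
Qed.

Lemma pre_kcompK a b : ks a = kr b -> pre (kcomp a b) (kd a) = a.
Proof. by move=> Hab; case: (factor_kcomp Hab erefl). Qed.

Lemma post_kcompK a b m : ks a = kr b -> kd a = m -> post (kcomp a b) m = b.
Proof. by move=> Hab Ha; case: (factor_kcomp Hab Ha). Qed.

Lemma pre_kd pi : pre pi (kd pi) = pi.
Proof. by rewrite -{1}(kcomp_idr pi) pre_kcompK // kr_s. Qed.

Lemma post_kd pi m : kd pi = m -> post pi m = ks pi.
Proof. by move=> Hm; rewrite -{1}(kcomp_idr pi) (post_kcompK _ Hm) // kr_s. Qed.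

Lemma pre0 pi : pre pi (nk0 k) = kr pi.
Proof. by rewrite -{1}(kcomp_idl pi) -(kd_id pi) pre_kcompK // ks_r. Qed.

Lemma post0 pi : post pi (nk0 k) = pi.
Proof. by rewrite -{1}(kcomp_idl pi) (post_kcompK _ (kd_id pi)) // ks_r. Qed.

Lemma ks_post pi m : nkle m (kd pi) -> ks (post pi m) = ks pi.
Proof. by move=> /factorP[_ _ Hc Hpi]; rewrite {2}Hpi kcomp_s. Qed.

Lemma pre_kcomp a b n : ks a = kr b -> nkle n (kd a) -> pre (kcomp a b) n = pre a n.
Proof.
move=> Hab /factorP[Hpre _ Hc Ha].
have Hs : ks (post a n) = kr b by rewrite -Hab {2}Ha kcomp_s.
have Hr : ks (pre a n) = kr (kcomp (post a n) b) by rewrite kcomp_r.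
by rewrite {1}Ha kcomp_assoc // (proj1 (factor_kcomp Hr Hpre)).
Qed.

Lemma post_kcomp a b n : ks a = kr b -> nkle n (kd b) ->
  post (kcomp a b) (nkadd (kd a) n) = post b n.
Proof.
move=> Hab /factorP[Hpre _ Hc Hb].
have Hr : ks a = kr (pre b n) by rewrite Hab {1}Hb kcomp_r.
have Hd : kd (kcomp a (pre b n)) = nkadd (kd a) n by rewrite kd_comp // Hpre.
by rewrite {1}Hb -kcomp_assoc // (post_kcompK _ Hd) // kcomp_s.
Qed.

Lemma pre_pre pi m n : nkle n m -> nkle m (kd pi) -> pre (pre pi m) n = pre pi n.
Proof.
move=> Hnm /factorP[Hpre _ Hc Hpi].
by rewrite {2}Hpi pre_kcomp // Hpre.
Qed.

Lemma is_vertex_kr pi : is_vertex (kr pi).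
Proof. exact: kd_id. Qed.

Lemma is_vertex_ks pi : is_vertex (ks pi).
Proof. by rewrite /is_vertex -kr_s kd_id. Qed.

Lemma vertex_kr v : is_vertex v -> kr v = v.
Proof. by move=> Hv; rewrite -{2}(pre_kd v) Hv pre0. Qed.

End Factorization.

Section InfinitePaths.
Variables (k : nat) (L : kgraph k).
Implicit Types (x y : ipath L) (lam : kpath L) (a b n : Nk k).

Definition ipath_of_prefixes (P : Nk k -> kpath L) : ipath L :=
  fun a b => post (P b) a.

Lemma ipath_of_prefixes0 P b : ipath_of_prefixes P (nk0 k) b = P b.
Proof. exact: post0. Qed.

Lemma is_infpath_of_prefixes P :
  (forall b, kd (P b) = b) -> (forall a b, nkle a b -> pre (P b) a = P a) ->
  is_infpath (ipath_of_prefixes P).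
Proof.
move=> HdP HpreP; have HleP a b : nkle a b -> nkle a (kd (P b)) by rewrite HdP.
split=> [a b /HleP /factorP[_ -> _ _] | a b Hab | a b c Hab Hbc]; first by rewrite HdP.
  have /factorP[_ _ Hc _] := HleP _ _ Hab.
  by rewrite /ipath_of_prefixes -Hc HpreP // post_kd // ks_post ?post_kd // ?HdP.
have /factorP[_ _ Hc Hb] := HleP _ _ Hbc; have /factorP[Hpa _ Ha Hab'] := HleP _ _ Hab.
rewrite HpreP // in Hc Hb.
have Hs : ks (post (P b) a) = kr (post (P c) b) by rewrite -Hc {2}Hab' kcomp_s.
rewrite /ipath_of_prefixes {1}Hb {1}Hab' kcomp_assoc //.
by apply: post_kcompK => //; rewrite kcomp_r.
Qed.

Lemma is_infpath_shift x n : is_infpath x -> is_infpath (shift n x).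
Proof.
case=> Hd Hrs Hc; split=> [a b Hab | a b Hab | a b c Hab Hbc]; rewrite /shift.
- by rewrite Hd; nk_arith.
- by apply: Hrs; nk_arith.
- by apply: Hc; nk_arith.
Qed.

Lemma infpath_kd x b : is_infpath x -> kd (x (nk0 k) b) = b.
Proof. by case=> Hd _ _; rewrite Hd; nk_arith. Qed.

Lemma infpath_kr x b : is_infpath x -> kr (x (nk0 k) b) = x (nk0 k) (nk0 k).
Proof. by case=> _ Hrs _; case: (Hrs _ _ (le0nk b)). Qed.

Lemma infpath_kcomp x a b : is_infpath x -> nkle a b ->
  ks (x (nk0 k) a) = kr (x a b) /\ x (nk0 k) b = kcomp (x (nk0 k) a) (x a b).
Proof.
case=> _ Hrs Hc Hab; split; last exact: Hc (le0nk a) Hab.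
by rewrite (proj2 (Hrs _ _ (le0nk a))) (proj1 (Hrs _ _ Hab)).
Qed.

Lemma infpath_pre_post x a b : is_infpath x -> nkle a b ->
  x (nk0 k) a = pre (x (nk0 k) b) a /\ x a b = post (x (nk0 k) b) a.
Proof.
move=> Hx Hab; have [Hs ->] := infpath_kcomp Hx Hab.
by case: (factor_kcomp Hs (infpath_kd _ Hx)).
Qed.

Lemma infpath_eq x y n : is_infpath x -> is_infpath y ->
  x (nk0 k) n = y (nk0 k) n -> ipeq (shift n x) (shift n y) -> ipeq x y.
Proof.
move=> Hx Hy Hn Hsh a b Hab.
have Hb : nkle b (nkadd b n) by nk_arith.
have Hxy : x (nk0 k) (nkadd b n) = y (nk0 k) (nkadd b n).
  have Hnb : nkle n (nkadd b n) by nk_arith.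
  rewrite (proj2 (infpath_kcomp Hx Hnb)) (proj2 (infpath_kcomp Hy Hnb)) Hn.
  by have := Hsh _ _ (le0nk b); rewrite /shift add0nk => ->.
rewrite (proj2 (infpath_pre_post Hx Hab)) (proj2 (infpath_pre_post Hy Hab)).
by rewrite (proj1 (infpath_pre_post Hx Hb)) (proj1 (infpath_pre_post Hy Hb)) Hxy.
Qed.

Lemma concat_kr lam x y : is_concat lam x y -> y (nk0 k) (nk0 k) = kr lam.
Proof. by case=> Hy <- _; rewrite infpath_kr. Qed.

Lemma concat_prefix lam x y a :
  is_concat lam x y -> y (nk0 k) (nkadd a (kd lam)) = kcomp lam (x (nk0 k) a).
Proof.
case=> Hy Hlam Hsh; have Ha : nkle (kd lam) (nkadd a (kd lam)) by nk_arith.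
have := Hsh _ _ (le0nk a); rewrite /shift add0nk => <-.
by rewrite -{2}Hlam; case: (infpath_kcomp Hy Ha).
Qed.

Lemma concat_unique lam x y y' : is_concat lam x y -> is_concat lam x y' -> ipeq y y'.
Proof.
case=> Hy Hlam Hsh [Hy' Hlam' Hsh'].
apply: (infpath_eq (n := kd lam) Hy Hy'); first by rewrite Hlam Hlam'.
by move=> a b Hab; rewrite Hsh ?Hsh'.
Qed.

Lemma concat_exists lam x : is_infpath x -> x (nk0 k) (nk0 k) = ks lam ->
  exists y, is_concat lam x y.
Proof.
move=> Hx Hx0; have Hlx b : ks lam = kr (x (nk0 k) b) by rewrite infpath_kr.
have Hd b : kd (kcomp lam (x (nk0 k) b)) = nkadd (kd lam) b.
  by rewrite kd_comp // infpath_kd.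
have Hext a b : nkle a b ->
    ks (kcomp lam (x (nk0 k) a)) = kr (x a b) /\
    kcomp lam (x (nk0 k) b) = kcomp (kcomp lam (x (nk0 k) a)) (x a b).
  by move=> Hab; have [Hs ->] := infpath_kcomp Hx Hab; rewrite kcomp_s // kcomp_assoc.
pose P b := pre (kcomp lam (x (nk0 k) b)) b.
have HP b : P (nkadd b (kd lam)) = kcomp lam (x (nk0 k) b).
  rewrite /P; have [Hs ->] := Hext b (nkadd b (kd lam)) (ltac:(nk_arith)).
  have Hdb : kd (kcomp lam (x (nk0 k) b)) = nkadd b (kd lam) by rewrite Hd nkaddC.
  exact: (proj1 (factor_kcomp Hs Hdb)).
exists (ipath_of_prefixes P); split.
- apply: is_infpath_of_prefixes => [b | a b Hab].
    by have /factorP[] : nkle b (kd (kcomp lam (x (nk0 k) b))) by rewrite Hd; nk_arith.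
  have [Hs Hb] := Hext _ _ Hab.
  rewrite /P pre_pre ?Hd //; last by nk_arith.
  by rewrite Hb pre_kcomp // Hd; nk_arith.
- by rewrite ipath_of_prefixes0 /P pre_kcompK.
- move=> a b Hab; rewrite /shift /ipath_of_prefixes HP nkaddC.
  by rewrite post_kcomp ?infpath_kd //; case: (infpath_pre_post Hx Hab).
Qed.

End InfinitePaths.

Definition nkconst k (n : nat) : Nk k := [ffun _ => n].

Section InfinitePathExistence.
Variables (k : nat) (L : kgraph k) (u : kpath L).
Hypotheses (Hsf : source_free L) (Hu : is_vertex u).

Definition unit_step (w : kpath L) : kpath L :=
  epsilon (inhabits w) (fun mu => kr mu = w /\ kd mu = nkconst k 1).

Fixpoint diagonal_path (n : nat) : kpath L :=
  if n is n'.+1 then kcomp (diagonal_path n') (unit_step (ks (diagonal_path n')))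
  else u.

Lemma unit_stepP (mu : kpath L) :
  kr (unit_step (ks mu)) = ks mu /\ kd (unit_step (ks mu)) = nkconst k 1.
Proof.
apply: (@epsilon_spec _ _ (fun nu => kr nu = ks mu /\ kd nu = nkconst k 1)).
exact: Hsf (is_vertex_ks mu).
Qed.

Lemma diagonal_pathP n : kd (diagonal_path n) = nkconst k n /\ kr (diagonal_path n) = u.
Proof.
elim: n => [|n [Hd Hr]] /=; first by rewrite vertex_kr // Hu; split=> //; nk_arith.
have [Hsr Hsd] := unit_stepP (diagonal_path n).
rewrite kd_comp ?kcomp_r // Hd Hsd; split=> //; apply: nk_ext => i; rewrite !ffunE; lia.
Qed.

Lemma pre_diagonal_path_mono (a : Nk k) n m : (n <= m)%N -> nkle a (nkconst k n) ->
  pre (diagonal_path m) a = pre (diagonal_path n) a.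
Proof.
move=> Hnm Ha; elim: m Hnm => [|m IHm]; first by rewrite leqn0 => /eqP->.
rewrite leq_eqVlt ltnS => /orP[/eqP-> // | Hnm] /=.
have [Hsr _] := unit_stepP (diagonal_path m).
rewrite pre_kcomp ?IHm // (proj1 (diagonal_pathP m)) => i.
by apply: leq_trans (Ha i) _; rewrite !ffunE.
Qed.

Lemma pre_diagonal_path (a : Nk k) n m : nkle a (nkconst k n) -> nkle a (nkconst k m) ->
  pre (diagonal_path m) a = pre (diagonal_path n) a.
Proof.
move=> Han Ham; case: (leqP n m) => [|/ltnW] Hnm; first exact: pre_diagonal_path_mono.
by rewrite (pre_diagonal_path_mono Hnm).
Qed.

Lemma infpath_exists : exists x : ipath L, is_infpath x /\ x (nk0 k) (nk0 k) = u.
Proof.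
pose N (b : Nk k) := (\max_(i < k) b i)%N.
have HN (b : Nk k) : nkle b (nkconst k (N b)) by move=> i; rewrite ffunE; apply: leq_bigmax.
have HNd b : nkle b (kd (diagonal_path (N b))) by rewrite (proj1 (diagonal_pathP _)).
exists (ipath_of_prefixes (fun b => pre (diagonal_path (N b)) b)); split.
  apply: is_infpath_of_prefixes => [b | a b Hab]; first by case: (factorP (HNd b)).
  rewrite pre_pre //; apply: pre_diagonal_path => // i.
  exact: leq_trans (Hab i) (HN b i).
by rewrite ipath_of_prefixes0 pre0 (proj2 (diagonal_pathP _)).
Qed.

End InfinitePathExistence.

Lemma infpath_through k (L : kgraph k) (lam : kpath L) : source_free L ->
  exists x, is_infpath x /\ x (nk0 k) (kd lam) = lam.
Proof.
move=> Hsf; have [z [Hz Hz0]] := infpath_exists Hsf (is_vertex_ks lam).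
by have [x [Hx Hlam _]] := concat_exists Hz Hz0; exists x.
Qed.

Lemma long_path_between k (L : kgraph k) (u w : kpath L) (D : Nk k) :
  source_free L -> strongly_connected L -> is_vertex u -> is_vertex w ->
  exists mu : kpath L, [/\ kr mu = u, ks mu = w & nkle D (kd mu)].
Proof.
move=> Hsf Hsc Hu Hw; have [a [Har Had]] := Hsf u D Hu.
have [b [Hbr Hbs]] := Hsc (ks a) w (is_vertex_ks a) Hw.
exists (kcomp a b); rewrite kcomp_r ?kcomp_s ?kd_comp // Had; split=> //; nk_arith.
Qed.

Section Cycline.
Variables (k : nat) (L : kgraph k) (G : group) (A : ssa L G).
Implicit Types (mu nu tau : kpath L) (h : gcar G) (x y : ipath L).

Lemma actK h mu : act A (ginv h) (act A h mu) = mu.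
Proof. by rewrite -actM gmulV act1. Qed.

Lemma actKV h mu : act A h (act A (ginv h) mu) = mu.
Proof. by rewrite -actM gmulVr act1. Qed.

Lemma iact0 h x b : is_infpath x -> iact A h x (nk0 k) b = act A h (x (nk0 k) b).
Proof.
by move=> Hx; rewrite /iact res_vertex // -(infpath_kr (nk0 k) Hx); apply: is_vertex_kr.
Qed.

Lemma locally_faithful_eq (w : kpath L) h1 h2 : locally_faithful A -> is_vertex w ->
  (forall tau, kr tau = w -> act A h1 tau = act A h2 tau) -> h1 = h2.
Proof.
move=> Hlf Hw Hh; have E : gmul (ginv h2) h1 = gone.
  by apply: (Hlf _ w Hw) => tau Htau; rewrite actM Hh // actK.
by rewrite -[h1]gmul1 -(gmulVr h2) -gmulA E gmulr1.
Qed.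

Lemma cycline_intro mu h nu : source_free L ->
  (forall x, is_infpath x -> x (nk0 k) (nk0 k) = ks nu ->
     exists y, is_concat mu (iact A h x) y /\ is_concat nu x y) ->
  cycline A mu h nu.
Proof.
move=> Hsf Hcat; split=> //.
have [x [Hx Hx0]] := infpath_exists Hsf (is_vertex_ks nu).
have [y [[[_ Hrs _] Hmu Hsh] _]] := Hcat x Hx Hx0.
have := Hsh _ _ (le0nk (nk0 k)); rewrite /shift add0nk iact0 // Hx0 => <-.
by rewrite -{1}Hmu; case: (Hrs _ _ (le0nk (kd mu))).
Qed.

Lemma cycline_prefix mu h nu x : cycline A mu h nu ->
  is_infpath x -> x (nk0 k) (nk0 k) = ks nu ->
  kcomp mu (act A h (x (nk0 k) (kd nu))) = kcomp nu (x (nk0 k) (kd mu)).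
Proof.
move=> [_ Hc] Hx Hx0; have [y [Hmu Hnu]] := Hc x Hx Hx0.
by rewrite -iact0 // -(concat_prefix _ Hmu) -(concat_prefix _ Hnu) nkaddC.
Qed.

Lemma cycline_unique_of_nu mu1 mu2 h1 h2 nu : source_free L -> locally_faithful A ->
  cycline A mu1 h1 nu -> cycline A mu2 h2 nu -> kd mu1 = kd mu2 ->
  h1 = h2 /\ mu1 = mu2.
Proof.
move=> Hsf Hlf [_ C1] [_ C2] Hd.
have Htail x : is_infpath x -> x (nk0 k) (nk0 k) = ks nu ->
    mu1 = mu2 /\ ipeq (iact A h1 x) (iact A h2 x).
  move=> Hx Hx0; have [y1 [[_ Hm1 Hs1] Hn1]] := C1 x Hx Hx0.
  have [y2 [[_ Hm2 Hs2] Hn2]] := C2 x Hx Hx0.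
  have Hy := concat_unique Hn1 Hn2.
  split; first by rewrite -Hm1 -Hm2 -Hd Hy //; apply: le0nk.
  by move=> a b Hab; rewrite -Hs1 // -Hs2 // /shift -Hd Hy //; nk_arith.
have [x [Hx Hx0]] := infpath_exists Hsf (is_vertex_ks nu).
split; last exact: (proj1 (Htail x Hx Hx0)).
apply: (locally_faithful_eq Hlf (is_vertex_ks nu)) => tau Htau.
have [z [Hz Hztau]] := infpath_through tau Hsf.
have Hz0 : z (nk0 k) (nk0 k) = ks nu by rewrite -Htau -Hztau infpath_kr.
rewrite -Hztau -(iact0 h1 _ Hz) -(iact0 h2 _ Hz).
exact: (proj2 (Htail z Hz Hz0)) (le0nk _).
Qed.

Lemma cycline_unique_of_mu mu h h' nu nu' : source_free L -> locally_faithful A ->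
  cycline A mu h nu -> cycline A mu h' nu' -> kd nu = kd nu' ->
  h = h' /\ nu = nu'.
Proof.
move=> Hsf Hlf C1 C2 Hd.
suff E : nu = nu' by subst nu'; have [-> _] := cycline_unique_of_nu Hsf Hlf C1 C2 erefl.
have [x [Hx Hx0]] := infpath_exists Hsf (is_vertex_ks nu).
pose om := act A (ginv h') (act A h (x (nk0 k) (kd nu))).
have Hom : kr om = ks nu'.
  rewrite /om !act_r infpath_kr // Hx0.
  by case: C1 => <- _; case: C2 => -> _; rewrite actK.
have [x' [Hx' Hom']] := infpath_through om Hsf.
have Hx'0 : x' (nk0 k) (nk0 k) = ks nu' by rewrite -Hom -Hom' infpath_kr.
have Hdom : kd om = kd nu' by rewrite !act_d infpath_kd.
have := cycline_prefix C2 Hx' Hx'0.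
rewrite -Hdom Hom' /om actKV (cycline_prefix C1 Hx Hx0) => Hpref.
have Hc : ks nu = kr (x (nk0 k) (kd mu)) by rewrite infpath_kr.
have Hc' : ks nu' = kr (x' (nk0 k) (kd mu)) by rewrite infpath_kr.
by rewrite -(pre_kcompK Hc) Hpref Hd pre_kcompK.
Qed.

End Cycline.

Section SigmaCycline.
Variables (k : nat) (L : kgraph k) (G : group) (A : ssa L G).
Variables (p q : Nk k) (g : gcar G) (v : kpath L).
Hypotheses (Hsf : source_free L) (Hsc : strongly_connected L) (Hv : is_vertex v).
Hypothesis (HS : Sigma A v p q g).

(* In the notation [lam = alpha rho = beta nu] with [d(rho) = P'] and [d(nu) = Q'],
   this is the triple [(g|alpha . rho, g|lam, nu)]; the witness for [x] is the tail of
   [lam x] starting where [nu] starts. *)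
Lemma cycline_of_Sigma (P' Q' : Nk k) (lam : kpath L) :
  nkadd p Q' = nkadd P' q -> kr lam = v -> nkle (nkadd P' q) (kd lam) ->
  cycline A (act A (res A g (pre lam (nksub (kd lam) P'))) (post lam (nksub (kd lam) P')))
            (res A g lam) (post lam (nksub (kd lam) Q')).
Proof.
move=> HPQ Hr Hlen.
have HP : nkle (nksub (kd lam) P') (kd lam) by nk_arith.
have HQ : nkle (nksub (kd lam) Q') (kd lam) by nk_arith.
have [_ HdP _ _] := factorP HP; have [_ HdQ _ _] := factorP HQ.
set rho := act A _ _; set nu := post lam _.
have Hdrho : kd rho = P' by rewrite act_d HdP; nk_arith.
have Hdnu : kd nu = Q' by rewrite HdQ; nk_arith.
apply: cycline_intro => // x Hx; rewrite ks_post // => Hx0.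
have [Y HY] := concat_exists Hx Hx0; have [Yinf Ylam Ysh] := HY.
have Ytail a b : nkle a b -> Y (nkadd a (kd lam)) (nkadd b (kd lam)) = x a b := Ysh a b.
have YS a b : nkle a b -> Y (nkadd a p) (nkadd b p) =
    act A (res A g (Y (nk0 k) (nkadd a q))) (Y (nkadd a q) (nkadd b q)).
  by move=> Hab; apply: (HS Yinf _ Hab); rewrite (concat_kr HY).
have Yseg a : nkle a (kd lam) -> Y (nk0 k) a = pre lam a /\ Y a (kd lam) = post lam a.
  by rewrite -{2 4}Ylam; apply: infpath_pre_post.
pose c := nksub (kd lam) (nkadd Q' p).
exists (shift (nksub (kd lam) Q') Y).
split; split; rewrite ?Hdrho ?Hdnu /shift; try exact: is_infpath_shift.
- rewrite (_ : nkadd _ _ = nkadd c p); last by nk_arith.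
  rewrite (_ : nkadd P' _ = nkadd (nkadd c P') p); last by nk_arith.
  rewrite YS; last by nk_arith.
  rewrite (_ : nkadd c q = nksub (kd lam) P'); last by nk_arith.
  rewrite (_ : nkadd (nkadd c P') q = kd lam); last by nk_arith.
  by have [-> ->] := Yseg _ HP.
- move=> a b Hab.
  rewrite (_ : nkadd (nkadd a P') _ = nkadd (nkadd (nkadd a P') c) p); last by nk_arith.
  rewrite (_ : nkadd (nkadd b P') _ = nkadd (nkadd (nkadd b P') c) p); last by nk_arith.
  rewrite YS; last by nk_arith.
  rewrite (_ : nkadd (nkadd (nkadd a P') c) q = nkadd a (kd lam)); last by nk_arith.
  rewrite (_ : nkadd (nkadd (nkadd b P') c) q = nkadd b (kd lam)); last by nk_arith.
  by rewrite /iact (concat_prefix _ HY) Ytail // res_comp // infpath_kr.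
- rewrite add0nk (_ : nkadd Q' _ = kd lam); last by nk_arith.
  by have [_ ->] := Yseg _ HQ.
- move=> a b Hab.
  rewrite (_ : nkadd (nkadd a Q') _ = nkadd a (kd lam)); last by nk_arith.
  rewrite (_ : nkadd (nkadd b Q') _ = nkadd b (kd lam)); last by nk_arith.
  exact: Ytail.
Qed.

Lemma Sigma_res_ks (a b : kpath L) : kr a = v -> kd a = q -> ks a = kr b -> nkle p (kd b) ->
  act A (res A g (kcomp a b)) (ks b) = act A (res A g a) (ks b).
Proof.
move=> Hr Ha Hab Hb; set lam := kcomp a b.
have Hd : kd lam = nkadd q (kd b) by rewrite kd_comp // Ha.
have HPQ : nkadd p (nksub (nkadd (kd b) q) p) = nkadd (kd b) q by nk_arith.
have Hlr : kr lam = v by rewrite kcomp_r.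
have Hlen : nkle (nkadd (kd b) q) (kd lam) by rewrite Hd; nk_arith.
have [] := cycline_of_Sigma HPQ Hlr Hlen.
rewrite (_ : nksub (kd lam) (kd b) = kd a); last by rewrite Hd Ha; nk_arith.
rewrite pre_kcompK // post_kcompK // act_s ks_post; last by nk_arith.
by rewrite kcomp_s // => ->.
Qed.

Lemma exists_cycline_of_nu (p' q' : Nk k) (nu : kpath L) :
  nkadd p q' = nkadd p' q -> kd nu = q' ->
  exists h mu, kd mu = p' /\ cycline A mu h nu.
Proof.
move=> HPQ Hnu.
have [al [Hr Hs Hlen]] := long_path_between (nkadd p' q) Hsf Hsc Hv (is_vertex_kr nu).
set lam := kcomp al nu.
have Hd : kd lam = nkadd (kd al) q' by rewrite kd_comp // Hnu.
have Hlr : kr lam = v by rewrite kcomp_r.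
have Hlen' : nkle (nkadd p' q) (kd lam) by rewrite Hd; nk_arith.
have Hpost : post lam (nksub (kd lam) q') = nu.
  by apply: post_kcompK => //; rewrite Hd; nk_arith.
have C := cycline_of_Sigma HPQ Hlr Hlen'; rewrite Hpost in C.
do 2 eexists; split; last exact: C.
rewrite act_d; have /factorP[_ -> _ _] : nkle (nksub (kd lam) p') (kd lam) by nk_arith.
nk_arith.
Qed.

Lemma exists_cycline_of_mu (p' q' : Nk k) (mu : kpath L) :
  nkadd p q' = nkadd p' q -> kd mu = p' ->
  exists h nu, kd nu = q' /\ cycline A mu h nu.
Proof.
move=> HPQ Hmu.
have [a0 [Ha0r Ha0d]] := Hsf q Hv.
pose h0 := res A g a0.
have Hu0 : is_vertex (act A h0 (ks a0)) by rewrite /is_vertex act_d; apply: is_vertex_ks.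
have [pi [Hpir Hpis Hpid]] := long_path_between p Hsf Hsc Hu0 (is_vertex_kr mu).
set be := act A (ginv h0) pi.
have Hbe : ks a0 = kr be by rewrite act_r Hpir actK.
set al := kcomp a0 be.
have Hal : act A (res A g al) (ks al) = kr mu.
  by rewrite kcomp_s // Sigma_res_ks ?act_d // act_s actKV.
set be' := act A (ginv (res A g al)) mu.
have Hbe' : ks al = kr be' by rewrite act_r -Hal actK.
set lam := kcomp al be'.
have Hd : kd lam = nkadd (kd al) p' by rewrite kd_comp // act_d Hmu.
have Hlr : kr lam = v by rewrite !kcomp_r.
have Hlen : nkle (nkadd p' q) (kd lam).
  by rewrite Hd kd_comp // Ha0d; nk_arith.
have Hdal : kd al = nksub (kd lam) p' by rewrite Hd; nk_arith.
have [Hpre Hpost] := factor_kcomp Hbe' Hdal.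
have C := cycline_of_Sigma HPQ Hlr Hlen.
rewrite Hpre Hpost actKV in C; do 2 eexists; split; last exact: C.
have /factorP[_ -> _ _] : nkle (nksub (kd lam) q') (kd lam) by nk_arith.
by rewrite Hd; nk_arith.
Qed.

End SigmaCycline.

Theorem proposition4p5 (k : nat) (L : kgraph k) (G : group) (A : ssa L G) :
  (0 < k)%N ->
  row_finite L -> source_free L -> strongly_connected L ->
  locally_faithful A ->
  forall p q p' q' : Nk k, nkadd p q' = nkadd p' q ->
  forall (g : gcar G) (v : kpath L), is_vertex v -> Sigma A v p q g ->
  (forall mu : kpath L, kd mu = p' ->
     exists! hn : gcar G * kpath L, kd hn.2 = q' /\ cycline A mu hn.1 hn.2) /\
  (forall nu' : kpath L, kd nu' = q' ->
     exists! hm : gcar G * kpath L, kd hm.2 = p' /\ cycline A hm.2 hm.1 nu').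
Proof.
move=> _ _ Hsf Hsc Hlf p q p' q' HPQ g v Hv HS; split=> [mu Hmu | nu Hnu].
- have [h [nu [Hnu C]]] := exists_cycline_of_mu Hsf Hsc Hv HS HPQ Hmu.
  exists (h, nu); split=> // [[h' nu']] /= [Hnu' C'].
  by have [-> ->] := cycline_unique_of_mu Hsf Hlf C C' (etrans Hnu (esym Hnu')).
- have [h [mu [Hmu C]]] := exists_cycline_of_nu Hsf Hsc Hv HS HPQ Hnu.
  exists (h, mu); split=> // [[h' mu']] /= [Hmu' C'].
  by have [-> ->] := cycline_unique_of_nu Hsf Hlf C C' (etrans Hmu (esym Hmu')).
Qed.
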